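(* Let $E$ be an ellipse with center $O$ and $\psi$ the elliptic inversion with respect to $E$. Let $P,T$ be distinct points different from $O$, let $P'=\psi(P)$, $T'=\psi(T)$, and let $w=w_P$, $u=w_T$. Then: (i) if $P,T,O$ are not collinear, $$P'T'=\frac{\sqrt{(w^2-u^2)\left(w^2(OT)^2-u^2(OP)^2\right)+w^2u^2(PT)^2}}{OP\cdot OT};$$ (ii) if $P,T,O$ are collinear, then $w=u$ and $$P'T'=\frac{w^2\,PT}{OP\cdot OT}.$$
   Context: Let $E$ be an ellipse in $\mathbb{R}^2$ with center $O$. For a point $P\neq O$, let $Q_P$ be the intersection point of the ray $\overrightarrow{OP}$ with $E$ and write $w_P=OQ_P$. The elliptic inversion is the map $\psi:\mathbb{R}^2\setminus\{O\}\to\mathbb{R}^2\setminus\{O\}$, $\psi(P)=P'$, where $P'$ is the unique point on the ray $\overrightarrow{OP}$ with $OP\cdot OP'=w_P^2$. $XY$ denotes the Euclidean distance between points $X$ and $Y$. *)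

From Stdlib Require Import Reals Lra.
Open Scope R_scope.

Definition point : Type := (R * R)%type.

Definition edist (X Y : point) : R :=
  sqrt ((fst X - fst Y) ^ 2 + (snd X - snd Y) ^ 2).

(* An ellipse with center O: the set of X with
   A x^2 + 2 B x y + C y^2 = 1, where (x,y) = X - O, and the quadratic form
   is positive definite (A > 0, A C - B^2 > 0).  Every ellipse in R^2
   (arbitrary orientation, circles included) with center O has this form. *)
Definition is_ellipse_form (A B C : R) : Prop := 0 < A /\ 0 < A * C - B ^ 2.

Definition on_ellipse (A B C : R) (O X : point) : Prop :=
  let x := fst X - fst O in
  let y := snd X - snd O in
  A * x ^ 2 + 2 * B * x * y + C * y ^ 2 = 1.

Definition on_ray (O P X : point) : Prop :=
  exists t : R, 0 <= t /\
    fst X = fst O + t * (fst P - fst O) /\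
    snd X = snd O + t * (snd P - snd O).

Definition collinear (O P T : point) : Prop :=
  (fst P - fst O) * (snd T - snd O) - (snd P - snd O) * (fst T - fst O) = 0.

From Stdlib Require Import Reals Lra.
Open Scope R_scope.

(* Write every point of the ray from O through P as
   [ray_point O P t] = O + t (P - O) with t >= 0; then O-distances scale
   linearly in t.  The inverse P' = O + s (P - O) satisfies s * OP^2 = w^2, and
   similarly T' = O + r (T - O) with r * OT^2 = u^2.

   (i) Expanding squared distances in coordinates, one polynomial identity
   [ray_points_dist_sq] expresses OP^2 OT^2 P'T'^2 through w^2 = s OP^2,
   u^2 = r OT^2, OP, OT and PT; taking square roots gives the formula.  This
   part needs no property of the ellipse.

   (ii) With F the quadratic form of the ellipse, a point O + t (P - O) of the
   ellipse satisfies t^2 F(P - O) = 1, hence w^2 F(P - O) = OP^2: the squared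
   radius in a direction is OP^2 / F(P - O), which only depends on the line
   OP.  For collinear O, P, T this gives w = u, and the identity of (i)
   collapses to OP^2 OT^2 P'T'^2 = w^4 PT^2.  Only F(P - O) <> 0 is used, which
   already follows from the ellipse meeting the ray. *)

Definition ray_point (O P : point) (t : R) : point :=
  (fst O + t * (fst P - fst O), snd O + t * (snd P - snd O)).

Definition form_at (A B C : R) (O X : point) : R :=
  A * (fst X - fst O) ^ 2 + 2 * B * (fst X - fst O) * (snd X - snd O)
  + C * (snd X - snd O) ^ 2.

Lemma on_ray_ray_point (O P X : point) :
  on_ray O P X -> exists t, 0 <= t /\ X = ray_point O P t.
Proof.
  intros [t [ht [ex ey]]]. exists t. split; [exact ht|].
  destruct X as [x y]. unfold ray_point. cbn in *. now rewrite ex, ey.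
Qed.

Lemma edist_sq (X Y : point) :
  edist X Y ^ 2 = (fst X - fst Y) ^ 2 + (snd X - snd Y) ^ 2.
Proof.
  unfold edist. apply pow2_sqrt.
  pose proof (pow2_ge_0 (fst X - fst Y)). pose proof (pow2_ge_0 (snd X - snd Y)).
  lra.
Qed.

Lemma edist_pos (X Y : point) : X <> Y -> 0 < edist X Y.
Proof.
  intros hXY. unfold edist. apply sqrt_lt_R0.
  destruct X as [x1 x2], Y as [y1 y2]; cbn.
  destruct (Rlt_or_le 0 ((x1 - y1) ^ 2 + (x2 - y2) ^ 2)) as [hpos | hle];
    [exact hpos|].
  exfalso. apply hXY.
  pose proof (pow2_ge_0 (x1 - y1)). pose proof (pow2_ge_0 (x2 - y2)).
  assert (e1 : x1 = y1) by nra. assert (e2 : x2 = y2) by nra. now rewrite e1, e2.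
Qed.

Lemma edist_center_pos (O P : point) : P <> O -> 0 < edist O P.
Proof. intros hPO. apply edist_pos. intros e. apply hPO. now rewrite e. Qed.

Lemma edist_ray_point (O P : point) (t : R) :
  0 <= t -> edist O (ray_point O P t) = t * edist O P.
Proof.
  intros ht. unfold edist at 1. rewrite <- (sqrt_pow2 (t * edist O P))
    by (apply Rmult_le_pos; [exact ht | apply sqrt_pos]).
  f_equal. rewrite Rpow_mult_distr, edist_sq. unfold ray_point; cbn. ring.
Qed.

Lemma ray_points_dist_sq (O P T : point) (s r : R) :
  let w2 := s * edist O P ^ 2 in
  let u2 := r * edist O T ^ 2 in
  (w2 - u2) * (w2 * edist O T ^ 2 - u2 * edist O P ^ 2)
    + w2 * u2 * edist P T ^ 2
  = (edist O P * edist O T) ^ 2 * edist (ray_point O P s) (ray_point O T r) ^ 2.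
Proof.
  cbv zeta. rewrite Rpow_mult_distr, !edist_sq. unfold ray_point; cbn. ring.
Qed.

Lemma sqrt_scaled_sq_div (k e : R) : 0 < k -> 0 <= e -> sqrt (k ^ 2 * e ^ 2) / k = e.
Proof.
  intros hk he. rewrite <- Rpow_mult_distr, sqrt_pow2 by nra. field. lra.
Qed.

Lemma form_at_ray_point (A B C : R) (O P : point) (t : R) :
  form_at A B C O (ray_point O P t) = t ^ 2 * form_at A B C O P.
Proof. unfold form_at, ray_point; cbn. ring. Qed.

Lemma ellipse_radius_sq (A B C : R) (O P : point) (t : R) :
  0 <= t -> on_ellipse A B C O (ray_point O P t) ->
  edist O (ray_point O P t) ^ 2 * form_at A B C O P = edist O P ^ 2.
Proof.
  intros ht hE. change (form_at A B C O (ray_point O P t) = 1) in hE.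
  rewrite form_at_ray_point in hE.
  rewrite edist_ray_point by exact ht.
  replace ((t * edist O P) ^ 2 * form_at A B C O P)
    with (t ^ 2 * form_at A B C O P * edist O P ^ 2) by ring.
  rewrite hE. ring.
Qed.

Lemma collinear_form_ratio (A B C : R) (O P T : point) :
  collinear O P T ->
  edist O P ^ 2 * form_at A B C O T = edist O T ^ 2 * form_at A B C O P.
Proof.
  unfold collinear. intros hcol.
  assert (factor : edist O P ^ 2 * form_at A B C O T - edist O T ^ 2 * form_at A B C O P
    = ((fst P - fst O) * (snd T - snd O) - (snd P - snd O) * (fst T - fst O))
      * ((C - A) * ((fst P - fst O) * (snd T - snd O) + (snd P - snd O) * (fst T - fst O))
         + 2 * B * ((fst P - fst O) * (fst T - fst O) - (snd P - snd O) * (snd T - snd O)))).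
  { rewrite !edist_sq. unfold form_at. ring. }
  rewrite hcol, Rmult_0_l in factor. lra.
Qed.

Lemma collinear_radii_eq (A B C : R) (O P T : point) (t t' : R) :
  P <> O -> T <> O -> 0 <= t -> 0 <= t' -> collinear O P T ->
  on_ellipse A B C O (ray_point O P t) -> on_ellipse A B C O (ray_point O T t') ->
  edist O (ray_point O P t) = edist O (ray_point O T t').
Proof.
  intros hPO hTO ht ht' hcol hP hT.
  pose proof (ellipse_radius_sq A B C O P t ht hP) as rP.
  pose proof (ellipse_radius_sq A B C O T t' ht' hT) as rT.
  pose proof (collinear_form_ratio A B C O P T hcol) as ratio.
  set (w := edist O (ray_point O P t)) in *.
  set (u := edist O (ray_point O T t')) in *.
  set (FP := form_at A B C O P) in *. set (FT := form_at A B C O T) in *.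
  assert (hFP : FP <> 0).
  { intros e. rewrite e, Rmult_0_r in rP.
    pose proof (edist_center_pos O P hPO). nra. }
  assert (hFT : FT <> 0).
  { intros e. rewrite e, Rmult_0_r in rT.
    pose proof (edist_center_pos O T hTO). nra. }
  assert (hsq : w ^ 2 = u ^ 2).
  { apply Rmult_eq_reg_r with (FP * FT).
    - replace (w ^ 2 * (FP * FT)) with ((w ^ 2 * FP) * FT) by ring.
      replace (u ^ 2 * (FP * FT)) with ((u ^ 2 * FT) * FP) by ring.
      now rewrite rP, rT.
    - now apply Rmult_integral_contrapositive. }
  assert (0 <= w) by apply sqrt_pos. assert (0 <= u) by apply sqrt_pos.
  nra.
Qed.

Theorem theorem1 (A B C : R) (O P T QP QT P' T' : point)
  (hE : is_ellipse_form A B C)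
  (hPO : P <> O) (hTO : T <> O) (hPT : P <> T)
  (hQPray : on_ray O P QP) (hQPE : on_ellipse A B C O QP)
  (hQTray : on_ray O T QT) (hQTE : on_ellipse A B C O QT)
  (hP'ray : on_ray O P P') (hP' : edist O P * edist O P' = (edist O QP) ^ 2)
  (hT'ray : on_ray O T T') (hT' : edist O T * edist O T' = (edist O QT) ^ 2) :
  let w := edist O QP in
  let u := edist O QT in
  (~ collinear O P T ->
     edist P' T' =
       sqrt ((w ^ 2 - u ^ 2) * (w ^ 2 * (edist O T) ^ 2 - u ^ 2 * (edist O P) ^ 2)
             + w ^ 2 * u ^ 2 * (edist P T) ^ 2)
       / (edist O P * edist O T)) /\
  (collinear O P T ->
     w = u /\ edist P' T' = w ^ 2 * edist P T / (edist O P * edist O T)).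
Proof.
  destruct (on_ray_ray_point _ _ _ hQPray) as [t [ht ->]].
  destruct (on_ray_ray_point _ _ _ hQTray) as [t' [ht' ->]].
  destruct (on_ray_ray_point _ _ _ hP'ray) as [s [hs ->]].
  destruct (on_ray_ray_point _ _ _ hT'ray) as [r [hr ->]].
  cbv zeta.
  pose proof (edist_center_pos O P hPO) as hOP.
  pose proof (edist_center_pos O T hTO) as hOT.
  assert (hw : edist O (ray_point O P t) ^ 2 = s * edist O P ^ 2)
    by (rewrite <- hP', edist_ray_point by exact hs; ring).
  assert (hu : edist O (ray_point O T t') ^ 2 = r * edist O T ^ 2)
    by (rewrite <- hT', edist_ray_point by exact hr; ring).
  pose proof (ray_points_dist_sq O P T s r) as key. cbv zeta in key.
  rewrite <- hw, <- hu in key.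
  assert (hk : 0 < edist O P * edist O T) by nra.
  assert (hd : 0 <= edist (ray_point O P s) (ray_point O T r)) by apply sqrt_pos.
  split.
  - intros _. rewrite key. now rewrite sqrt_scaled_sq_div.
  - intros hcol.
    pose proof (collinear_radii_eq A B C O P T t t' hPO hTO ht ht' hcol hQPE hQTE) as hwu.
    split; [exact hwu|].
    rewrite <- hwu in key.
    set (w := edist O (ray_point O P t)) in *.
    assert (collapse : (w ^ 2 - w ^ 2) * (w ^ 2 * edist O T ^ 2 - w ^ 2 * edist O P ^ 2)
                       + w ^ 2 * w ^ 2 * edist P T ^ 2 = (w ^ 2 * edist P T) ^ 2) by ring.
    rewrite <- (sqrt_scaled_sq_div _ _ hk hd), <- key, collapse, sqrt_pow2; [reflexivity|].
    apply Rmult_le_pos; [apply pow2_ge_0 | apply sqrt_pos].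
Qed.
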